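(* Let $n\geq 3$ and let $\rho: B_n \rightarrow GL_n(\mathbb{C})$ be a non-trivial homogeneous $2$-local representation of $B_n$. Let $\hat{\rho}: SM_n \rightarrow M_n(\mathbb{C})$ be a $\Phi$-type extension of $\rho$ to $SM_n$. Then $\hat{\rho}$ is equivalent to one of the following three representations, where for $1\le i\le n-1$ and $X\in M_2(\mathbb{C})$, $s\in\mathbb{C}$ we write $E_i(s;X)=\mathrm{diag}(sI_{i-1},X,sI_{n-i-1})$ and $D_i(X)=E_i(1;X)$: (1) $\hat{\rho}_1(\sigma_i)=D_i\begin{pmatrix} a&\frac{1-a}{c}\\ c&0\end{pmatrix}$ and $\hat{\rho}_1(\tau_i)=E_i\left(u+v+w;\begin{pmatrix} ua+w & \frac{u(1-a)+v}{c}\\ uc+\frac{vc}{1-a} & \frac{-va}{1-a}+w\end{pmatrix}\right)$, where $a,c,u,v,w\in\mathbb{C}$, $a\neq 1$, $c\neq 0$; (2) $\hat{\rho}_2(\sigma_i)=D_i\begin{pmatrix} 0&\frac{1-d}{c}\\ c&d\end{pmatrix}$ and $\hat{\rho}_2(\tau_i)=E_i\left(u+v+w;\begin{pmatrix} \frac{-vd}{1-d}+w & \frac{u(1-d)+v}{c}\\ uc+\frac{vc}{1-d} & ud+w\end{pmatrix}\right)$, where $c,d,u,v,w\in\mathbb{C}$, $d\neq 1$, $c\neq 0$; (3) $\hat{\rho}_3(\sigma_i)=D_i\begin{pmatrix} 0&b\\ c&0\end{pmatrix}$ and $\hat{\rho}_3(\tau_i)=E_i\left(u+v+w;\begin{pmatrix}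 w & ub+\frac{v}{c}\\ uc+\frac{v}{b} & w\end{pmatrix}\right)$, where $b,c,u,v,w\in\mathbb{C}$, $b\neq 0$, $c\neq 0$; in each case for all $1\le i\le n-1$.
   Context: The braid group $B_n$ has generators $\sigma_1,\dots,\sigma_{n-1}$ with relations $\sigma_i\sigma_{i+1}\sigma_i=\sigma_{i+1}\sigma_i\sigma_{i+1}$ ($1\le i\le n-2$) and $\sigma_i\sigma_j=\sigma_j\sigma_i$ ($|i-j|\ge2$). The singular braid monoid $SM_n$ is the monoid generated by $\sigma_1^{\pm1},\dots,\sigma_{n-1}^{\pm1},\tau_1,\dots,\tau_{n-1}$ subject to $\sigma_i\sigma_i^{-1}=\sigma_i^{-1}\sigma_i=1$, the braid relations above, and $\tau_i\tau_j=\tau_j\tau_i$, $\tau_i\sigma_j=\sigma_j\tau_i$ for $|i-j|\ge 2$, $\tau_i\sigma_i=\sigma_i\tau_i$, and $\sigma_i\sigma_{i+1}\tau_i=\tau_{i+1}\sigma_i\sigma_{i+1}$, $\sigma_{i+1}\sigma_i\tau_{i+1}=\tau_i\sigma_{i+1}\sigma_i$ for $1\le i\le n-2$. A representation $\rho:B_n\to GL_n(\mathbb{C})$ is homogeneous $2$-local if there is $M\in M_2(\mathbb{C})$ with $\rho(\sigma_i)=\mathrm{diag}(I_{i-1},M,I_{n-i-1})$ for all $1\le i\le n-1$; ''non-trivial'' means not sending every $\sigma_i$ to the identity. A $\Phi$-type extension of $\rho$ to $SM_n$ is a monoid homomorphism $\hat\rho:SM_n\to M_n(\mathbb{C})$ for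 which there exist $u,v,w\in\mathbb{C}$ with $\hat\rho(\sigma_i^{\pm1})=\rho(\sigma_i)^{\pm1}$ and $\hat\rho(\tau_i)=u\rho(\sigma_i)+v\rho(\sigma_i)^{-1}+wI_n$ for all $1\le i\le n-1$ (any such choice of $u,v,w$ defines a representation of $SM_n$). Two representations are equivalent if they are conjugate by a fixed invertible matrix. *)

From HB Require Import structures.
From mathcomp Require Import all_boot all_order all_algebra all_field.
Set Implicit Arguments. Unset Strict Implicit. Unset Printing Implicit Defensive.
Import Order.TTheory GRing.Theory Num.Theory.
Local Open Scope ring_scope.

Definition mx2 (a b c d : algC) : 'M[algC]_2 :=
  \matrix_(j < 2, k < 2)
    if val j == 0%N then (if val k == 0%N then a else b)
    else (if val k == 0%N then c else d).

(* E_i(s; X) = diag(s I_{i-1}, X, s I_{n-i-1}), generator index i in 1..n-1: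
   the block X occupies (0-based) rows/columns i-1 and i. *)
Definition Emx (n i : nat) (s : algC) (X : 'M[algC]_2) : 'M[algC]_n :=
  \matrix_(j < n, k < n)
    if ((i.-1 <= j <= i)%N && (i.-1 <= k <= i)%N)
    then X (inord (j - i.-1)) (inord (k - i.-1))
    else (j == k)%:R * s.

Definition Dmx (n i : nat) (X : 'M[algC]_2) : 'M[algC]_n := Emx n i 1 X.

Definition braid_rep (n : nat) (s : nat -> 'M[algC]_n) : Prop :=
  (forall i, (0 < i < n)%N -> s i \in unitmx) /\
  (forall i, (0 < i)%N -> (i + 1 < n)%N ->
     s i *m s (i + 1)%N *m s i = s (i + 1)%N *m s i *m s (i + 1)%N) /\
  (forall i j, (0 < i < n)%N -> (0 < j < n)%N -> (i + 2 <= j)%N ->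
     s i *m s j = s j *m s i).

Definition hom_2local_rep (n : nat) (rho : nat -> 'M[algC]_n) : Prop :=
  braid_rep rho /\ exists M : 'M[algC]_2, forall i, (0 < i < n)%N -> rho i = Dmx n i M.

(* (s, t) : images of sigma_i and tau_i define a monoid homomorphism
   SM_n -> M_n(C), where s i must be invertible (sigma_i^{-1} |-> invmx (s i)). *)
Definition sm_rep (n : nat) (s t : nat -> 'M[algC]_n) : Prop :=
  braid_rep s /\
  (forall i j, (0 < i < n)%N -> (0 < j < n)%N -> (i + 2 <= j)%N ->
     t i *m t j = t j *m t i /\ t i *m s j = s j *m t i /\ t j *m s i = s i *m t j) /\
  (forall i, (0 < i < n)%N -> t i *m s i = s i *m t i) /\
  (forall i, (0 < i)%N -> (i + 1 < n)%N ->
     s i *m s (i + 1)%N *m t i = t (i + 1)%N *m s i *m s (i + 1)%N /\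
     s (i + 1)%N *m s i *m t (i + 1)%N = t i *m s (i + 1)%N *m s i).

Definition phi_type_ext (n : nat) (rho tau : nat -> 'M[algC]_n) : Prop :=
  sm_rep rho tau /\
  exists u v w : algC, forall i, (0 < i < n)%N ->
    tau i = u *: rho i + v *: invmx (rho i) + w%:M.

Definition equiv_sm (n : nat) (rho tau rho' tau' : nat -> 'M[algC]_n) : Prop :=
  exists P : 'M[algC]_n, P \in unitmx /\
    forall i, (0 < i < n)%N ->
      invmx P *m rho i *m P = rho' i /\ invmx P *m tau i *m P = tau' i.

Definition rho1 n (a c : algC) := fun i => Dmx n i (mx2 a ((1 - a) / c) c 0).
Definition tau1 n (a c u v w : algC) := fun i =>
  Emx n i (u + v + w)
    (mx2 (u * a + w) ((u * (1 - a) + v) / c)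
         (u * c + v * c / (1 - a)) (- v * a / (1 - a) + w)).
Definition rho2 n (c d : algC) := fun i => Dmx n i (mx2 0 ((1 - d) / c) c d).
Definition tau2 n (c d u v w : algC) := fun i =>
  Emx n i (u + v + w)
    (mx2 (- v * d / (1 - d) + w) ((u * (1 - d) + v) / c)
         (u * c + v * c / (1 - d)) (u * d + w)).
Definition rho3 n (b c : algC) := fun i => Dmx n i (mx2 0 b c 0).
Definition tau3 n (b c u v w : algC) := fun i =>
  Emx n i (u + v + w) (mx2 w (u * b + v / c) (u * c + v / b) w).

(* Write rho(sigma_i) = D_i(M) with M = [[a, b], [c, d]].  The braid relation
   between sigma_1 and sigma_2 lives in the top-left 3x3 corner, where it reads
   a(a + bc - 1) = d(d + bc - 1) = abd = acd = ad(d - a) = 0.  As M is invertible,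
   either M = 1 or one of a, d vanishes, and solving for b gives exactly the three
   families, with no change of basis needed.  Since D_i(M)^-1 = D_i(M^-1), the
   Phi-type extension is tau_i = E_i(u + v + w; u M + v M^-1 + w), and the block is
   computed by inverting M explicitly. *)

From HB Require Import structures.
From mathcomp Require Import all_boot all_order all_algebra all_field.
From mathcomp Require Import zify ring.
Set Implicit Arguments.
Unset Strict Implicit.
Unset Printing Implicit Defensive.
Import Order.TTheory GRing.Theory Num.Theory.
Local Open Scope ring_scope.

Lemma mulmx1_eq (R : comUnitRingType) m (A B : 'M[R]_m) : A *m B = 1%:M -> invmx A = B.
Proof. by move=> AB; have [Au _] := mulmx1_unit AB; rewrite -[LHS]mulmx1 -AB mulKmx. Qed.

Lemma ulsubmx_mul (R : pzRingType) m1 m2 n1 n2 p1 p2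
    (A : 'M[R]_(m1 + m2, n1 + n2)) (B : 'M[R]_(n1 + n2, p1 + p2)) :
  ursubmx A = 0 -> ulsubmx (A *m B) = ulsubmx A *m ulsubmx B.
Proof.
by move=> A0; rewrite -{1}[A]submxK -{1}[B]submxK mulmx_block block_mxKul A0 mul0mx addr0.
Qed.

Lemma ursubmx_mul (R : pzRingType) m1 m2 n1 n2 p1 p2
    (A : 'M[R]_(m1 + m2, n1 + n2)) (B : 'M[R]_(n1 + n2, p1 + p2)) :
  ursubmx A = 0 -> ursubmx B = 0 -> ursubmx (A *m B) = 0.
Proof.
move=> A0 B0.
by rewrite -{1}[A]submxK -{1}[B]submxK mulmx_block block_mxKur A0 B0 mul0mx mulmx0 addr0.
Qed.

Definition phi_mx m (u v w : algC) (A : 'M[algC]_m) := u *: A + v *: invmx A + w%:M.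

Section Mx2.

Implicit Types (a b c d s : algC).

Lemma mx2_eta (X : 'M[algC]_2) : X = mx2 (X 0 0) (X 0 1) (X 1 0) (X 1 1).
Proof.
by apply/matrixP => -[[|[|//]] ?] [[|[|//]] ?]; rewrite mxE /=; congr (X _ _); apply: val_inj.
Qed.

Lemma add_mx2 a b c d a' b' c' d' :
  mx2 a b c d + mx2 a' b' c' d' = mx2 (a + a') (b + b') (c + c') (d + d').
Proof. by apply/matrixP => j k; rewrite !mxE; case: ifP; case: ifP. Qed.

Lemma scale_mx2 s a b c d : s *: mx2 a b c d = mx2 (s * a) (s * b) (s * c) (s * d).
Proof. by apply/matrixP => j k; rewrite !mxE; case: ifP; case: ifP. Qed.

Lemma scalar_mx2 s : s%:M = mx2 s 0 0 s.
Proof. by apply/matrixP => -[[|[|//]] ?] [[|[|//]] ?]; rewrite !mxE. Qed.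

Lemma mul_mx2 a b c d a' b' c' d' :
  mx2 a b c d *m mx2 a' b' c' d' =
  mx2 (a * a' + b * c') (a * b' + b * d') (c * a' + d * c') (c * b' + d * d').
Proof.
by apply/matrixP => -[[|[|//]] ?] [[|[|//]] ?];
  rewrite !mxE !big_ord_recl big_ord0 !mxE /= addr0.
Qed.

Lemma det_mx2 a b c d : \det (mx2 a b c d) = a * d - b * c.
Proof.
rewrite (expand_det_row _ 0) !big_ord_recl big_ord0 /cofactor !det_mx11 !mxE /=.
by rewrite expr0 expr1; ring.
Qed.

Lemma invmx_mx2 a b c d : a * d - b * c != 0 ->
  invmx (mx2 a b c d) = (a * d - b * c)^-1 *: mx2 d (- b) (- c) a.
Proof.
move=> det_neq0; apply: mulmx1_eq.
by rewrite scale_mx2 mul_mx2 scalar_mx2; congr mx2; field.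
Qed.

End Mx2.

Section EmxAlgebra.

Variables n i : nat.
Implicit Types (s t : algC) (X Y : 'M[algC]_2).

Local Notation in_block j := (i.-1 <= j <= i)%N.

Lemma Emx_add s t X Y : Emx n i s X + Emx n i t Y = Emx n i (s + t) (X + Y).
Proof. by apply/matrixP => j k; rewrite !mxE; case: ifP; rewrite ?mulrDr. Qed.

Lemma Emx_scale a s X : a *: Emx n i s X = Emx n i (a * s) (a *: X).
Proof. by apply/matrixP => j k; rewrite !mxE; case: ifP => // _; rewrite mulrCA. Qed.

Lemma scalar_Emx s : s%:M = Emx n i s s%:M.
Proof.
apply/matrixP => j k; rewrite !mxE; case: ifP => [/andP[jb kb]|_]; last by rewrite mulr_natl.
suff -> : ((inord (j - i.-1) : 'I_2) == inord (k - i.-1)) = (j == k) by [].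
by rewrite -val_eqE -[j == k]val_eqE /= !inordK; lia.
Qed.

Lemma Dmx1 : Dmx n i 1%:M = 1%:M.
Proof. by rewrite /Dmx -scalar_Emx. Qed.

Hypothesis i_gt0 : (0 < i)%N.
Hypothesis i_lt_n : (i < n)%N.

Fact block_ord_subproof (r : 'I_2) : (i.-1 + r < n)%N.
Proof. by have := ltn_ord r; lia. Qed.

Definition block_ord (r : 'I_2) : 'I_n := Ordinal (block_ord_subproof r).

Lemma block_ord_in_block r : in_block (block_ord r).
Proof. by have := ltn_ord r; rewrite /=; lia. Qed.

Lemma block_ordK (j : 'I_n) : in_block j -> block_ord (inord (j - i.-1)) = j.
Proof. by move=> jb; apply: val_inj; rewrite /= inordK; lia. Qed.

Lemma Emx_block s X r r' : Emx n i s X (block_ord r) (block_ord r') = X r r'.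
Proof.
rewrite mxE !block_ord_in_block /=.
by congr (X _ _); apply: val_inj; rewrite /= addKn inord_val.
Qed.

Lemma Emx_row_out s X (j k : 'I_n) : ~~ in_block j -> Emx n i s X j k = (j == k)%:R * s.
Proof. by move=> jNb; rewrite mxE (negbTE jNb). Qed.

Lemma Emx_col_out s X (j k : 'I_n) : ~~ in_block k -> Emx n i s X j k = (j == k)%:R * s.
Proof. by move=> kNb; rewrite mxE (negbTE kNb) andbF. Qed.

Lemma sum_in_block (F : 'I_n -> algC) :
  \sum_(l : 'I_n | in_block l) F l = \sum_(r < 2) F (block_ord r).
Proof.
rewrite (reindex_onto block_ord (fun j : 'I_n => inord (j - i.-1))); last first.
  by move=> j; apply: block_ordK.
by apply: eq_bigl => r; rewrite block_ord_in_block /= addKn inord_val eqxx.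
Qed.

Lemma Emx_mul s t X Y : Emx n i s X *m Emx n i t Y = Emx n i (s * t) (X *m Y).
Proof.
apply/matrixP => j k; rewrite mxE.
have [jb | jNb] := boolP (in_block j); last first.
  rewrite (bigD1 j) //= big1 ?addr0 => [|l /negbTE lj]; last first.
    by rewrite Emx_row_out // eq_sym lj !mul0r.
  by rewrite !Emx_row_out // eqxx mul1r mulrCA.
rewrite (bigID (fun l : 'I_n => in_block l)) /= [X in _ + X]big1 ?addr0 => [|l lNb]; last first.
  rewrite Emx_col_out //.
  have -> : (j == l) = false by apply/eqP => jl; rewrite -jl jb in lNb.
  by rewrite !mul0r.
rewrite sum_in_block -(block_ordK jb).
under eq_bigr => r _ do rewrite Emx_block.
have [kb | kNb] := boolP (in_block k).
  rewrite -(block_ordK kb) Emx_block mxE.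
  by under eq_bigr => r _ do rewrite Emx_block.
have ord_neq_k (l : 'I_n) : in_block l -> (l == k) = false.
  by move=> lb; apply/eqP => lk; rewrite -lk lb in kNb.
rewrite Emx_col_out // ord_neq_k ?block_ord_in_block // mul0r big1 // => r _.
by rewrite Emx_col_out // ord_neq_k ?block_ord_in_block // mul0r mulr0.
Qed.

Lemma invmx_Dmx X : X \in unitmx -> invmx (Dmx n i X) = Dmx n i (invmx X).
Proof. by move=> Xu; apply: mulmx1_eq; rewrite /Dmx Emx_mul mulr1 mulmxV // -scalar_Emx. Qed.

Lemma unitmx_Dmx X : Dmx n i X \in unitmx -> X \in unitmx.
Proof.
(* The kernel of X, placed in the block, is annihilated by the unit Dmx n i X. *)
move=> DXu; rewrite -row_free_unit -kermx_eq0; apply/eqP.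
have ker_Dmx : Emx n i 0 (kermx X) *m Dmx n i X = 0.
  rewrite /Dmx Emx_mul mul0r mulmx_ker.
  by apply/matrixP => j k; rewrite !mxE; case: ifP; rewrite ?mxE ?mulr0.
have Ekerx0 : Emx n i 0 (kermx X) = 0.
  by rewrite -[LHS]mulmx1 -(mulmxV DXu) mulmxA ker_Dmx mul0mx.
by apply/matrixP => r r'; rewrite -(@Emx_block 0 (kermx X) r r') Ekerx0 !mxE.
Qed.

Lemma phi_Dmx u v w X :
  X \in unitmx -> phi_mx u v w (Dmx n i X) = Emx n i (u + v + w) (phi_mx u v w X).
Proof.
move=> Xu; rewrite /phi_mx invmx_Dmx // (@scalar_Emx w) /Dmx.
by rewrite !Emx_scale !Emx_add !mulr1.
Qed.

End EmxAlgebra.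

Lemma ulsubmx_Emx p q i s X : ulsubmx (Emx (p + q) i s X) = Emx p i s X.
Proof. by apply/matrixP => j k; rewrite !mxE eq_shift. Qed.

Lemma ursubmx_Emx p q i s X : (i < p)%N -> ursubmx (Emx (p + q) i s X) = 0.
Proof.
move=> ip; apply/matrixP => j k; rewrite !mxE eq_shift /=.
have -> : (p + k <= i)%N = false by lia.
by rewrite !andbF mul0r.
Qed.

Definition Dmx_braid m (X : 'M[algC]_2) : Prop :=
  Dmx m 1 X *m Dmx m 2 X *m Dmx m 1 X = Dmx m 2 X *m Dmx m 1 X *m Dmx m 2 X.

Lemma Dmx_braid_ulsubmx p q X : (2 < p)%N -> Dmx_braid (p + q) X -> Dmx_braid p X.
Proof.
rewrite /Dmx_braid /Dmx => p_gt2 /(congr1 (@ulsubmx _ p q p q)).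
by rewrite !ulsubmx_mul ?ulsubmx_Emx // ?ursubmx_mul ?ursubmx_Emx // ltnW.
Qed.

Lemma Dmx_braid3_eqs a b c d : Dmx_braid 3 (mx2 a b c d) ->
  [/\ a * (a + b * c - 1) = 0, d * (d + b * c - 1) = 0, a * b * d = 0,
      a * c * d = 0 & a * d * (d - a) = 0].
Proof.
move=> braid; have entry (j k : 'I_3) := congr1 (fun A : 'M_3 => A j k) braid.
move: (entry 0 0) (entry 2 2) (entry 0 1) (entry 1 0) (entry 1 1).
rewrite /= !mxE !big_ord_recl !big_ord0 !mxE /= !big_ord_recl !big_ord0 !mxE /= !inordK //=.
rewrite !(mulr0, mul0r, mulr1, mul1r, addr0, add0r) => e00 e22 e01 e10 e11.
have diff0 (x y z : algC) : x = y -> z = x - y -> z = 0 by move=> -> ->; rewrite subrr.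
split; [apply: (diff0 _ _ _ e00) | apply: (diff0 _ _ _ (esym e22)) |
  apply: (diff0 _ _ _ e01) | apply: (diff0 _ _ _ e10) | apply: (diff0 _ _ _ e11)]; ring.
Qed.

Lemma braid_eqs_cases (F : fieldType) (a b c d : F) :
  [/\ a * (a + b * c - 1) = 0, d * (d + b * c - 1) = 0, a * b * d = 0,
      a * c * d = 0 & a * d * (d - a) = 0] ->
  a * d - b * c != 0 ->
  [\/ [/\ a != 1, c != 0, b = (1 - a) / c & d = 0],
      [/\ d != 1, c != 0, b = (1 - d) / c & a = 0],
      [/\ b != 0, c != 0, a = 0 & d = 0] |
      [/\ a = 1, b = 0, c = 0 & d = 1]].
Proof.
move=> [e1 e2 e3 e4 e5] det_neq0.
have [a0|a0] := eqVneq a 0; have [d0|d0] := eqVneq d 0.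
- move: det_neq0; rewrite a0 d0 mul0r sub0r oppr_eq0 mulf_eq0 negb_or => /andP[b0 c0].
  exact: Or43.
- have bc0 : b * c != 0 by move: det_neq0; rewrite a0 mul0r sub0r oppr_eq0.
  have bc : b * c = 1 - d.
    move/eqP: e2; rewrite mulf_eq0 (negbTE d0) subr_eq0 => /eqP <-.
    by rewrite addrAC subrr add0r.
  move: (bc0); rewrite mulf_eq0 negb_or => /andP[b0 c0].
  by apply: Or42; split; rewrite // -?bc ?mulfK // eq_sym -subr_eq0 -bc.
- have bc0 : b * c != 0 by move: det_neq0; rewrite d0 mulr0 sub0r oppr_eq0.
  have bc : b * c = 1 - a.
    move/eqP: e1; rewrite mulf_eq0 (negbTE a0) subr_eq0 => /eqP <-.
    by rewrite addrAC subrr add0r.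
  move: (bc0); rewrite mulf_eq0 negb_or => /andP[b0 c0].
  by apply: Or41; split; rewrite // -?bc ?mulfK // eq_sym -subr_eq0 -bc.
- have ad_cancel z : a * z * d = 0 -> z = 0.
    by move/eqP; rewrite !mulf_eq0 (negbTE a0) (negbTE d0) orbF => /eqP.
  have b0 := ad_cancel _ e3; have c0 := ad_cancel _ e4.
  move/eqP: e5; rewrite !mulf_eq0 (negbTE a0) (negbTE d0) subr_eq0 => /eqP da.
  move/eqP: e1; rewrite mulf_eq0 (negbTE a0) b0 mul0r addr0 subr_eq0 => /eqP a1.
  by apply: Or44; split; rewrite ?da.
Qed.

Section PhiFamilies.

Variables u v w : algC.

Lemma phi_mx2_rho1 a c : a != 1 -> c != 0 ->
  phi_mx u v w (mx2 a ((1 - a) / c) c 0) =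
  mx2 (u * a + w) ((u * (1 - a) + v) / c)
      (u * c + v * c / (1 - a)) (- v * a / (1 - a) + w).
Proof.
move=> a1 c0; have a1' : 1 - a != 0 by rewrite subr_eq0 eq_sym.
rewrite /phi_mx invmx_mx2; last by rewrite mulr0 sub0r oppr_eq0 divfK.
by rewrite !scale_mx2 scalar_mx2 !add_mx2; congr mx2; field; rewrite a1' c0.
Qed.

Lemma phi_mx2_rho2 c d : d != 1 -> c != 0 ->
  phi_mx u v w (mx2 0 ((1 - d) / c) c d) =
  mx2 (- v * d / (1 - d) + w) ((u * (1 - d) + v) / c)
      (u * c + v * c / (1 - d)) (u * d + w).
Proof.
move=> d1 c0; have d1' : 1 - d != 0 by rewrite subr_eq0 eq_sym.
rewrite /phi_mx invmx_mx2; last by rewrite mul0r sub0r oppr_eq0 divfK.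
by rewrite !scale_mx2 scalar_mx2 !add_mx2; congr mx2; field; rewrite d1' c0.
Qed.

Lemma phi_mx2_rho3 b c : b != 0 -> c != 0 ->
  phi_mx u v w (mx2 0 b c 0) = mx2 w (u * b + v / c) (u * c + v / b) w.
Proof.
move=> b0 c0; rewrite /phi_mx invmx_mx2; last by rewrite mul0r sub0r oppr_eq0 mulf_neq0.
by rewrite !scale_mx2 scalar_mx2 !add_mx2; congr mx2; field; rewrite ?b0 ?c0.
Qed.

End PhiFamilies.

Lemma eq_equiv_sm n (rho tau rho' tau' : nat -> 'M[algC]_n) :
  (forall i, (0 < i < n)%N -> rho i = rho' i /\ tau i = tau' i) ->
  equiv_sm rho tau rho' tau'.
Proof.
by move=> E; exists 1%:M; split=> [|i /E]; rewrite ?unitmx1 // invmx1 !mul1mx !mulmx1.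
Qed.

Theorem theorem3p5 (n : nat) (rho tau : nat -> 'M[algC]_n) :
  (3 <= n)%N ->
  hom_2local_rep rho ->
  ~ (forall i, (0 < i < n)%N -> rho i = 1%:M) ->
  phi_type_ext rho tau ->
  (exists a c u v w : algC, a != 1 /\ c != 0 /\
     equiv_sm rho tau (rho1 n a c) (tau1 n a c u v w)) \/
  (exists c d u v w : algC, d != 1 /\ c != 0 /\
     equiv_sm rho tau (rho2 n c d) (tau2 n c d u v w)) \/
  (exists b c u v w : algC, b != 0 /\ c != 0 /\
     equiv_sm rho tau (rho3 n b c) (tau3 n b c u v w)).
Proof.
move=> n_ge3 [[rho_unit [rho_braid _]] [M rhoM]] rho_nontriv [_ [u [v [w tauE]]]].
have [m n_eq] : exists m, n = (3 + m)%N by exists (n - 3)%N; rewrite subnKC.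
have [a [b [c [d M_eq]]]] : exists a b c d, M = mx2 a b c d by do 4 eexists; exact: mx2_eta.
subst n M.
have M_unit : mx2 a b c d \in unitmx.
  by apply: (@unitmx_Dmx (3 + m) 1) => //; rewrite -rhoM // rho_unit.
have det_neq0 : a * d - b * c != 0 by rewrite -det_mx2 -unitfE -unitmxE.
have braid : Dmx_braid 3 (mx2 a b c d).
  by apply: (@Dmx_braid_ulsubmx 3 m) => //; rewrite /Dmx_braid -!rhoM //; apply: rho_braid.
have tauM i : (0 < i < 3 + m)%N ->
    tau i = Emx (3 + m) i (u + v + w) (phi_mx u v w (mx2 a b c d)).
  move=> i_range; have /andP[i_gt0 i_lt] := i_range.
  by rewrite tauE // rhoM //; apply: phi_Dmx.
move: rhoM tauM; case: (braid_eqs_cases (Dmx_braid3_eqs braid) det_neq0).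
- move=> [a1 c0 -> ->] rhoM tauM; left; exists a, c, u, v, w; do 2 split => //.
  by apply: eq_equiv_sm => i i_range; rewrite rhoM // tauM // phi_mx2_rho1.
- move=> [d1 c0 -> ->] rhoM tauM; right; left; exists c, d, u, v, w; do 2 split => //.
  by apply: eq_equiv_sm => i i_range; rewrite rhoM // tauM // phi_mx2_rho2.
- move=> [b0 c0 -> ->] rhoM tauM; right; right; exists b, c, u, v, w; do 2 split => //.
  by apply: eq_equiv_sm => i i_range; rewrite rhoM // tauM // phi_mx2_rho3.
- move=> [-> -> -> ->] rhoM _; case: rho_nontriv => i i_range.
  by rewrite rhoM // -scalar_mx2 Dmx1.
Qed.
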